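(* Let $X$ be a finite set with $|X|\ge 3$, let $T\in B(X)$, and let $\mathcal T\subseteq\binom{X}{2}$ be a triplet cover for $T$. Then $|\mathcal T|\ge 2|X|-3$. Moreover this bound is tight: for every $T\in B(X)$ there exists a triplet cover for $T$ of cardinality exactly $2|X|-3$.
   Context: A binary phylogenetic $X$-tree is an unrooted tree $T=(V,E)$ whose leaf set is $X$ and in which every non-leaf vertex is unlabelled and has degree three; $B(X)$ is the set of such trees. Let $\mathring V$ denote the set of interior vertices of $T$. Elements of $\binom{X}{2}$ are written $ab$, triples in $\binom{X}{3}$ are written $abc$. Given $\mathcal T\subseteq\binom{X}{2}$, a triple $abc$ supports $v\in\mathring V$ (relative to $\mathcal T$) if $a,b,c$ lie one in each of the three connected components of $T$ with $v$ and its incident edges removed, and $ab,ac,bc\in\mathcal T$. $\mathcal T$ is a triplet cover for $T$ if every $v\in\mathring V$ is supported by some triple. *)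

From mathcomp Require Import all_boot.
Set Implicit Arguments. Unset Strict Implicit. Unset Printing Implicit Defensive.

Definition simple_graph (V : finType) (e : rel V) : Prop :=
  symmetric e /\ irreflexive e.

Definition degree (V : finType) (e : rel V) (v : V) : nat := #|[set w | e v w]|.

Definition acyclic (V : finType) (e : rel V) : Prop :=
  forall p : seq V, 3 <= size p -> uniq p -> ~~ cycle e p.

Definition connected (V : finType) (e : rel V) : Prop :=
  forall x y : V, connect e x y.

Definition is_tree (V : finType) (e : rel V) : Prop :=
  simple_graph e /\ connected e /\ acyclic e.

(* T = (V, e) with leaf labelling l : X -> V is a binary phylogenetic X-tree:
   a tree whose leaves (degree-1 vertices) are exactly the (injective) image of X,
   and whose non-leaf vertices all have degree 3. *)
Definition binary_phylo (X V : finType) (e : rel V) (l : X -> V) : Prop :=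
  [/\ is_tree e, injective l,
      (forall v : V, degree e v = 1 <-> exists x, l x = v) &
      (forall v : V, (forall x, l x != v) -> degree e v = 3)].

Definition interior (X V : finType) (l : X -> V) (v : V) : Prop :=
  forall x, l x != v.

Definition remove_vertex (V : finType) (e : rel V) (v : V) : rel V :=
  fun x y => [&& e x y, x != v & y != v].

Definition pair_set (X : finType) (TT : {set {set X}}) : Prop :=
  forall A, A \in TT -> #|A| = 2.

Definition supports (X V : finType) (e : rel V) (l : X -> V)
    (TT : {set {set X}}) (a b c : X) (v : V) : Prop :=
  [/\ [/\ l a != v, l b != v & l c != v],
      [/\ ~~ connect (remove_vertex e v) (l a) (l b),
          ~~ connect (remove_vertex e v) (l a) (l c) &
          ~~ connect (remove_vertex e v) (l b) (l c)] &
      [/\ [set a; b] \in TT, [set a; c] \in TT & [set b; c] \in TT]].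

Definition triplet_cover (X V : finType) (e : rel V) (l : X -> V)
    (TT : {set {set X}}) : Prop :=
  pair_set TT /\
  forall v : V, interior l v -> exists a b c : X, supports e l TT a b c v.

From mathcomp Require Import all_boot zify.
Set Implicit Arguments. Unset Strict Implicit. Unset Printing Implicit Defensive.

(* Let A be a connected set of interior vertices of T, and call two leaves
   equivalent when T - A joins them; the classes are the blocks of A.  If v has a
   single neighbour n3 in A, passing from A to A \ v merges exactly the two blocks
   on the sides of the other two neighbours n1, n2 of v.  By induction from
   |A| = 1 (three blocks), A has |A| + 2 blocks; all interior vertices together
   give singleton blocks, so |X| = #interior + 2.
   Now count the pairs of blocks joined by a pair of the cover TT.  A triple
   supporting v has one leaf on each side of v, so the merge loses the pair
   joining the blocks of n1 and n2 and identifies the two pairs joining them to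
   the block of the third leaf.  Starting from three pairs for |A| = 1, there are
   at least 2|A| + 1 of them, hence |TT| >= 2(|X| - 2) + 1.
   For tightness, fix a leaf r and take all pairs xr together with, for each
   interior vertex v, a pair ab with a, b in the two components of T - v that do
   not contain r; then abr supports v. *)

Lemma cards3 (T : finType) (a b c : T) :
  a != b -> a != c -> b != c -> #|[set a; b; c]| = 3.
Proof.
by move=> ab ac bc; rewrite -setUA cardsU1 cards2 bc !inE negb_or ab ac.
Qed.

Lemma ltn_imset_card (aT rT : finType) (f : aT -> rT) (D : {set aT}) x y :
  x \in D -> y \in D -> x != y -> f x = f y -> #|f @: D| < #|D|.
Proof.
move=> xD yD xy fxy; rewrite ltn_neqAle leq_imset_card andbT.
by apply/imset_injP => inj; move: xy; rewrite (inj x y xD yD fxy) eqxx.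
Qed.

Section Walks.
Variables (V : finType) (r : rel V).

Lemma connect_uniq_path x y : connect r x y ->
  exists p, [/\ path r x p, uniq (x :: p) & last x p = y].
Proof.
case/connectP=> p Hp ->; have [p' Hp' Hu _] := shortenP Hp.
by exists p'.
Qed.

Lemma connect_sub_preorder (R : rel V) :
  reflexive R -> transitive R -> subrel r R -> subrel (connect r) R.
Proof.
move=> Rrefl Rtrans rR x _ /connectP[p Hp ->].
elim: p x Hp => [|y p IH] x /=; first by move=> _; apply: Rrefl.
by case/andP=> /rR xy /IH; apply: Rtrans.
Qed.

Lemma connect_closed_pred (S : pred V) x y :
  (forall a b, S a -> r a b -> S b) -> S x -> connect r x y -> S y.
Proof.
move=> Sr Sx /connectP[p Hp ->].
elim: p x Sx Hp => //= a p IH x Sx /andP[xa]; exact/IH/(Sr _ _ Sx xa).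
Qed.

Lemma uniq_path_inner_nbrs p u z : path r u p -> uniq (u :: p) ->
  z \in p -> z != last u p -> exists a b, [/\ a != b, r a z & r z b].
Proof.
elim: p u => [|c p IH] u //= /andP[ruc Hp] /andP[Hu Hu2].
rewrite inE => /orP[/eqP Ezc|Hz] Hl; last exact: IH Hp Hu2 Hz Hl.
subst z; case: p Hp Hu Hl {Hu2 IH} => [|b p] /=; first by rewrite eqxx.
case/andP=> rcb _; rewrite !inE negb_or => /andP[_ /norP[Hub _]] _.
by exists u, b.
Qed.

Lemma uniq_path_extend_maximal x s : path r x s -> uniq (x :: s) ->
  exists q, [/\ path r x (s ++ q), uniq (x :: s ++ q) &
    forall z, r (last x (s ++ q)) z -> z \in x :: s ++ q].
Proof.
have [n] := ubnP (#|V| - size s); elim: n s => // n IH s Hn Hp Hu.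
case: (pickP [pred z | r (last x s) z & z \notin x :: s]) => [z /andP[rz zn]|none].
  have Hu' : uniq (x :: rcons s z) by rewrite -rcons_cons rcons_uniq zn Hu.
  have Hp' : path r x (rcons s z) by rewrite rcons_path Hp rz.
  have Hs : size (x :: rcons s z) <= #|V| by rewrite -(card_uniqP Hu') max_card.
  have Hlt : #|V| - size (rcons s z) < n.
    by move: Hn Hs; rewrite /= !size_rcons; move: #|V| (size s) => a b; lia.
  have [q [Hq Huq Hmax]] := IH (rcons s z) Hlt Hp' Hu'.
  by exists (z :: q); rewrite -cat_rcons.
exists [::]; rewrite cats0; split=> // z rz.
by have := none z; rewrite /= rz => /negbFE.
Qed.

End Walks.

Section Acyclic.
Variables (V : finType) (e : rel V).
Hypotheses (eirr : irreflexive e) (eacyc : acyclic e).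

Lemma acyclic_path_last_nbr s x y z : path e x (rcons s y) -> uniq (x :: rcons s y) ->
  z \in x :: rcons s y -> e y z -> z = last x s.
Proof.
elim: s x => [|a s IH] x /=.
  by rewrite andbT !inE => _ _ /orP[]/eqP-> //; rewrite eirr.
case/andP=> exa Hp /andP[Hx Hu]; rewrite inE => /orP[/eqP->|Hz] Hyz; last first.
  exact: IH Hp Hu Hz Hyz.
have := eacyc (p := x :: a :: rcons s y); rewrite /= size_rcons Hx Hu.
by rewrite exa rcons_path Hp last_rcons Hyz => /(_ isT isT).
Qed.

End Acyclic.

Section MergeBlocks.
Variables (X B : finType).

(* When [f] maps each leaf to its block, [cross f TT] is the set of pairs of
   blocks joined by some pair of [TT]. *)
Definition cross (f : X -> B) (TT : {set {set X}}) : {set {set B}} :=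
  [set Q in [set f @: S | S : {set X} in TT] | #|Q| == 2].

Lemma cross_pair f (TT : {set {set X}}) a b :
  [set a; b] \in TT -> f a != f b -> [set f a; f b] \in cross f TT.
Proof.
move=> abT fab; rewrite inE cards2 fab andbT.
by apply/imsetP; exists [set a; b]; rewrite // imsetU1 imset_set1.
Qed.

Lemma eq_cross (f g : X -> B) (TT : {set {set X}}) : f =1 g -> cross f TT = cross g TT.
Proof.
move=> fg; have fgS (S : {set X}) : f @: S = g @: S by apply: eq_imset.
by rewrite /cross (eq_imset _ fgS).
Qed.

Lemma card_cross_inj (f : X -> B) (TT : {set {set X}}) :
  injective f -> pair_set TT -> #|cross f TT| = #|TT|.
Proof.
move=> f_inj pairT; have -> : cross f TT = [set f @: S | S : {set X} in TT].
  apply/setP=> Q; rewrite inE andb_idr // => /imsetP[S ST ->].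
  by rewrite card_imset // pairT.
by rewrite card_imset //; apply: imset_inj.
Qed.

Lemma cross_triangle (f : X -> B) (TT : {set {set X}}) a b c :
  [set a; b] \in TT -> [set a; c] \in TT -> [set b; c] \in TT ->
  f a != f b -> f a != f c -> f b != f c -> 3 <= #|cross f TT|.
Proof.
move=> abT acT bcT fab fac fbc.
have sub : [set [set f a; f b]; [set f a; f c]; [set f b; f c]] \subset cross f TT.
  by apply/subsetP=> Q; rewrite !in_setU !in_set1 => /orP[/orP[]|]/eqP->; apply: cross_pair.
apply: leq_trans (subset_leq_card sub); rewrite cards3 //.
- by apply: contraTneq (set22 (f a) (f b)) => ->; rewrite !inE negb_or eq_sym fab fbc.
- by apply: contraTneq (set21 (f a) (f b)) => ->; rewrite !inE negb_or fab fac.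
- by apply: contraTneq (set21 (f a) (f c)) => ->; rewrite !inE negb_or fab fac.
Qed.

Lemma card_imset_merge (f : X -> B) (h : B -> B) k1 k2 :
  k1 \in [set f x | x : X] -> k2 \in [set f x | x : X] -> k1 != k2 -> h k1 = h k2 ->
  {in [set f x | x : X] :\ k2 &, injective h} ->
  #|[set f x | x : X]| = #|[set h (f x) | x : X]| + 1.
Proof.
set F := [set f x | x : X] => k1F k2F k12 hk inj_h.
have -> : [set h (f x) | x : X] = h @: (F :\ k2).
  rewrite (imset_comp h f); apply/eqP; rewrite eqEsubset [X in _ && X]imsetS ?subsetDl // andbT.
  apply/subsetP=> _ /imsetP[k kF ->]; apply/imsetP.
  have [->|kk2] := eqVneq k k2; first by exists k1; [rewrite !inE k12 | ].
  by exists k; [rewrite !inE kk2 | ].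
by rewrite card_in_imset // (cardsD1 k2 F) k2F addnC.
Qed.

Lemma card_cross_merge (f : X -> B) (h : B -> B) (TT : {set {set X}}) k1 k2 c :
  pair_set TT -> h k1 = h k2 -> k1 != k2 -> c != k1 -> c != k2 ->
  [set k1; k2] \in cross f TT -> [set k1; c] \in cross f TT ->
  [set k2; c] \in cross f TT ->
  #|cross (fun x => h (f x)) TT| + 2 <= #|cross f TT|.
Proof.
(* Each pair of blocks joined after merging comes from one joined before, other
   than {k1, k2}; and {k1, c}, {k2, c} give the same one. *)
move=> pairT hk k12 ck1 ck2 Q0E Q1E Q2E.
set D := cross f TT :\ [set k1; k2].
pose H (Q : {set B}) := h @: Q.
have HQ0 : #|H [set k1; k2]| = 1 by rewrite /H imsetU1 imset_set1 hk setUid cards1.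
have sub : cross (fun x => h (f x)) TT \subset H @: D.
  apply/subsetP=> Y; rewrite inE => /andP[/imsetP[S ST ->] /eqP hS2].
  have Hf : [set h (f x) | x in S] = H (f @: S) by rewrite /H -imset_comp.
  have fS2 : #|f @: S| = 2.
    apply/eqP; rewrite eqn_leq -{1}(pairT _ ST) leq_imset_card /=.
    by rewrite -{1}hS2 Hf leq_imset_card.
  apply/imsetP; exists (f @: S) => //; rewrite !inE; apply/andP; split.
    by apply: contra_eqN hS2 => /eqP fSQ0; rewrite Hf fSQ0 HQ0.
  by rewrite fS2 andbT; apply/imsetP; exists S.
have neq_c (Q : {set B}) : c \in Q -> Q != [set k1; k2].
  by move=> cQ; apply: contraTneq cQ => ->; rewrite !inE negb_or ck1.
have Q1D : [set k1; c] \in D by rewrite in_setD1 Q1E andbT neq_c // !inE eqxx orbT.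
have Q2D : [set k2; c] \in D by rewrite in_setD1 Q2E andbT neq_c // !inE eqxx orbT.
have Q12 : [set k1; c] != [set k2; c].
  by apply: contraTneq (set21 k1 c) => ->; rewrite !inE negb_or (negbTE k12) eq_sym (negbTE ck1).
have HQ12 : H [set k1; c] = H [set k2; c] by rewrite /H !imsetU1 hk.
rewrite (cardsD1 [set k1; k2] (cross f TT)) Q0E -/D add1n addn2 ltnS.
exact: leq_ltn_trans (subset_leq_card sub) (ltn_imset_card Q1D Q2D Q12 HQ12).
Qed.

End MergeBlocks.

Section PhyloTree.
Variables (X V : finType) (e : rel V) (l : X -> V).
Hypotheses (esym : symmetric e) (eirr : irreflexive e).
Hypotheses (econn : connected e) (eacyc : acyclic e) (l_inj : injective l).
Hypothesis leaf_deg : forall v, degree e v = 1 <-> exists x, l x = v.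
Hypothesis inner_deg : forall v, (forall x, l x != v) -> degree e v = 3.
Hypothesis X_ge3 : 3 <= #|X|.

Definition inner := [set v | [forall x, l x != v]].
Definition avoid (A : {set V}) : rel V := fun x y => [&& e x y, x \notin A & y \notin A].
Definition induced (A : {set V}) : rel V := fun x y => [&& e x y, x \in A & y \in A].
Definition connected_in (A : {set V}) := {in A &, forall u w, connect (induced A) u w}.
Definition peripheral (A : {set V}) v n :=
  [/\ v \in A, n \in A, e v n & forall u, u \in A -> e v u -> u = n].
Definition other_nbrs v n n1 n2 :=
  [/\ [/\ n1 != n2, n1 != n & n2 != n], e v n1, e v n2 &
      forall w, e v w -> [\/ w = n, w = n1 | w = n2]].

Local Notation rv v := (remove_vertex e v).

Lemma innerP v : reflect (interior l v) (v \in inner).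
Proof. by rewrite inE; apply: forallP. Qed.

Lemma inner_neq v x : v \in inner -> l x != v.
Proof. by move/innerP. Qed.

Lemma leaf_notin_inner x : l x \notin inner.
Proof. by apply/negP=> /innerP/(_ x); rewrite eqxx. Qed.

Lemma leaf_nbr_uniq v a b : v \notin inner -> e v a -> e v b -> a = b.
Proof.
rewrite inE negb_forall => /existsP[x /negPn/eqP lx] va vb; apply/eqP; apply: contraT => ab.
have : [set a; b] \subset [set w | e v w].
  by apply/subsetP=> w; rewrite !inE => /orP[]/eqP->.
move/subset_leq_card; rewrite cards2 ab.
by rewrite -/(degree e v) (proj2 (leaf_deg v)) //; exists x.
Qed.

Lemma nbrs2_inner v a b : a != b -> e v a -> e v b -> v \in inner.
Proof.
by move=> ab va vb; apply: contraTT ab => /leaf_nbr_uniq/(_ va vb)->; rewrite eqxx.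
Qed.

Lemma inner_nbrs v n : v \in inner -> e v n -> exists n1 n2, other_nbrs v n n1 n2.
Proof.
move=> /innerP/inner_deg; rewrite /degree => deg3 vn.
have nN : n \in [set w | e v w] by rewrite inE.
move: deg3; rewrite (cardsD1 n) nN => -[] /eqP/cards2P[n1 [n2 [n12 N]]].
have : n1 \in [set w | e v w] :\ n by rewrite N !inE eqxx.
have : n2 \in [set w | e v w] :\ n by rewrite N !inE eqxx orbT.
rewrite !inE => /andP[n2n vn2] /andP[n1n vn1].
exists n1, n2; split=> // w vw.
have [->|wn] := eqVneq w n; first by constructor 1.
have : w \in [set w | e v w] :\ n by rewrite !inE wn.
by rewrite N !inE => /orP[]/eqP->; [constructor 2|constructor 3].
Qed.

Lemma inner_nbrs_sub2 v a b : v \in inner -> ~~ ([set w | e v w] \subset [set a; b]).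
Proof.
move/innerP/inner_deg; rewrite /degree => deg3; apply/negP=> /subset_leq_card.
by rewrite deg3 cards2; case: (a != b).
Qed.

Lemma rv_sym v : connect_sym (rv v).
Proof.
apply: sym_connect_sym => x y; rewrite /remove_vertex esym.
by case: (e y x); rewrite //= andbC.
Qed.

Lemma avoid_sym (A : {set V}) : connect_sym (avoid A).
Proof.
apply: sym_connect_sym => x y; rewrite /avoid esym.
by case: (e y x); rewrite //= andbC.
Qed.

Lemma connect_avoidS (A B : {set V}) :
  B \subset A -> subrel (connect (avoid A)) (connect (avoid B)).
Proof.
move=> /subsetP BA; apply: connect_sub => x y /and3P[xy xA yA].
by apply: connect1; rewrite /avoid xy (contra (BA x) xA) (contra (BA y) yA).
Qed.

Lemma connect_avoid_rv (A : {set V}) v :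
  v \in A -> subrel (connect (avoid A)) (connect (rv v)).
Proof.
move=> vA x y /(connect_avoidS (_ : [set v] \subset A)) xy.
rewrite sub1set in xy; move: (xy vA); apply: connect_sub => a b /and3P[ab aV bV].
by apply: connect1; rewrite /remove_vertex ab -!in_set1 aV bV.
Qed.

Lemma avoid_isolated (A : {set V}) v z : v \in A -> connect (avoid A) z v -> z = v.
Proof.
move=> vA; rewrite avoid_sym => vz; apply/eqP.
apply: (connect_closed_pred (S := pred1 v) _ _ vz) => //= a b /eqP-> /and3P[_].
by rewrite vA.
Qed.

Lemma rv_sub v : subrel (rv v) e.
Proof. by move=> x y /andP[]. Qed.

Lemma rv_path_notin v x p : x != v -> path (rv v) x p -> v \notin x :: p.
Proof.
elim: p x => [|y p IH] x xv /=; first by rewrite inE eq_sym.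
by case/andP=> /and3P[_ _ yv] /(IH _ yv) vN; rewrite in_cons negb_or eq_sym xv.
Qed.

Lemma uniq_path_last_edge (r : rel V) u p v : subrel r e -> path r u (rcons p v) ->
  uniq (u :: rcons p v) -> connect (rv v) u (last u p) /\ r (last u p) v.
Proof.
move=> re; rewrite rcons_path -rcons_cons rcons_uniq => /andP[Hp ->] /andP[vN _].
split=> //; apply: (path_connect (p := p)); last exact: mem_last.
apply: (sub_in_path (P := predC1 v) (e := e)); last exact: (sub_path re Hp).
  by move=> a b; rewrite !inE => av bv ab; rewrite /remove_vertex ab av bv.
by apply/allP=> y yp /=; apply: contraNneq vN => <-.
Qed.

Lemma rv_nbr_side z v : z != v -> exists2 n, e v n & connect (rv v) n z.
Proof.
move=> zv; have [p [Hp Hu Hl]] := connect_uniq_path (econn z v).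
case/lastP: p Hp Hu Hl => [|p y] Hp Hu Hl; first by move: zv; rewrite -Hl eqxx.
rewrite last_rcons in Hl; subst y.
have [zp pv] := uniq_path_last_edge (fun _ _ h => h) Hp Hu.
by exists (last z p); [rewrite esym | rewrite rv_sym].
Qed.

Lemma rv_nbrs_disconnected v n1 n2 :
  e v n1 -> e v n2 -> n1 != n2 -> ~~ connect (rv v) n1 n2.
Proof.
move=> vn1 vn2 n12; apply/negP=> /connect_uniq_path[p [Hp Hu Hl]].
case/lastP: p Hp Hu Hl => [|p y] Hp Hu Hl; first by move: n12; rewrite -Hl eqxx.
rewrite last_rcons in Hl; subst y.
have n1v : n1 != v by apply: contraTneq vn1 => ->; rewrite eirr.
have vN := rv_path_notin n1v Hp.
have Pe : path e v (rcons (n1 :: p) n2).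
  by rewrite rcons_cons /= vn1 (sub_path (@rv_sub v) Hp).
have Ue : uniq (v :: rcons (n1 :: p) n2) by rewrite rcons_cons cons_uniq vN Hu.
have n2v : e n2 v by rewrite esym.
have /= E := acyclic_path_last_nbr eirr eacyc Pe Ue (mem_head _ _) n2v.
by move: vN; rewrite -rcons_cons mem_rcons inE E mem_last orbT.
Qed.

Lemma rv_sides_apart v n n' y z : e v n -> e v n' -> n != n' ->
  connect (rv v) n y -> connect (rv v) n' z -> ~~ connect (rv v) y z.
Proof.
move=> vn vn' nn' ny n'z; apply: contraNN (rv_nbrs_disconnected vn vn' nn') => yz.
by rewrite (connect_trans ny) // (connect_trans yz) // rv_sym.
Qed.

Lemma rv_side_leaf v n : e v n -> exists x, connect (rv v) n (l x).
Proof.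
(* The far end of a maximal path from n in T - v has no neighbour besides v and
   its predecessor, so it cannot have degree 3. *)
move=> vn; have nv : n != v by apply: contraTneq vn => ->; rewrite eirr.
have [q [Hp Hu Hmax]] := uniq_path_extend_maximal (r := rv v) (x := n) (s := [::]) isT isT.
rewrite cat0s in Hp Hu Hmax.
suff : last n q \notin inner.
  rewrite inE negb_forall => /existsP[x /negPn/eqP lx]; exists x; rewrite lx.
  exact: path_connect Hp _ (mem_last n q).
have yv : last n q != v by apply: contraNneq (rv_path_notin nv Hp) => <-; apply: mem_last.
have yN w : e (last n q) w -> w != v -> w \in n :: q.
  by move=> yw wv; apply: Hmax; rewrite /remove_vertex yw yv.
have [pr sub] : exists pr, [set w | e (last n q) w] \subset [set v; pr].
  case/lastP: q Hp Hu yN {Hmax yv} => [|q y] Hp Hu yN.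
    exists n; apply/subsetP=> w; rewrite !inE => nw.
    by have [->|/(yN _ nw)] := eqVneq w v; rewrite ?eqxx ?inE ?orbT.
  exists (last n q); apply/subsetP=> w; rewrite !inE => yw.
  have [//|wv] := eqVneq w v; rewrite last_rcons in yw.
  apply/eqP; apply: (acyclic_path_last_nbr eirr eacyc (sub_path (@rv_sub v) Hp) Hu) => //.
  by apply: yN; rewrite ?last_rcons.
by apply: contraTN sub; apply: inner_nbrs_sub2.
Qed.

Lemma rv_leaves_apart v z : v \in inner -> z != v -> exists a b : X,
  [&& ~~ connect (rv v) (l a) (l b), ~~ connect (rv v) (l a) z & ~~ connect (rv v) (l b) z].
Proof.
move=> vI zv; have [n0 vn0 n0z] := rv_nbr_side zv.
have [n1 [n2 [[n12 n10 n20] vn1 vn2 _]]] := inner_nbrs vI vn0.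
have [a n1a] := rv_side_leaf vn1; have [b n2b] := rv_side_leaf vn2.
exists a, b; rewrite (rv_sides_apart vn1 vn2 n12 n1a n2b).
by rewrite (rv_sides_apart vn1 vn0 n10 n1a n0z) (rv_sides_apart vn2 vn0 n20 n2b n0z).
Qed.

Lemma induced_sub (A : {set V}) : subrel (induced A) e.
Proof. by move=> x y /and3P[]. Qed.

Lemma connected_in_peripheral (A : {set V}) :
  1 < #|A| -> connected_in A -> exists v n, peripheral A v n.
Proof.
(* The far end of a maximal path in A is peripheral, by acyclicity. *)
case/card_gt1P=> x [y [xA yA xy]] Aconn.
have [q [Hp Hu Hmax]] := uniq_path_extend_maximal (r := induced A) (x := x) (s := [::]) isT isT.
rewrite cat0s in Hp Hu Hmax.
case/lastP: q Hp Hu Hmax => [|q v] Hp Hu Hmax.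
  case/connectP: (Aconn x y xA yA) xy => [[|x1 p] /=]; first by move=> _ ->; rewrite eqxx.
  case/andP=> /[dup] /and3P[xx1 _ _] /Hmax; rewrite inE => /eqP x1x.
  by move: xx1; rewrite x1x eirr.
rewrite last_rcons in Hmax; move: (Hp); rewrite rcons_path => /andP[_ /and3P[qv qA vA]].
exists v, (last x q); split=> //; first by rewrite esym.
move=> u uA vu; have xvu : induced A v u by rewrite /induced vu vA uA.
have He := sub_path (@induced_sub A) Hp.
exact: (acyclic_path_last_nbr eirr eacyc He Hu (Hmax _ xvu) vu).
Qed.

Lemma connected_inD1 (A : {set V}) v n :
  connected_in A -> peripheral A v n -> connected_in (A :\ v).
Proof.
move=> Aconn [vA _ _ vP] u w; rewrite !inE => /andP[uv uA] /andP[wv wA].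
have [p [Hp Hu Hl]] := connect_uniq_path (Aconn u w uA wA).
have vp : v \notin p.
  apply/negP=> vp; have /(uniq_path_inner_nbrs Hp Hu vp) : v != last u p by rewrite Hl eq_sym.
  case=> a [b [ab /and3P[av aA _] /and3P[vb _ bA]]].
  by move: ab; rewrite (vP a aA) 1?esym // (vP b bA vb) eqxx.
apply/connectP; exists p => //; apply: (sub_in_path (P := predC1 v) (e := induced A)) => //.
  by move=> a b; rewrite !inE => av bv /and3P[ab aA bA]; rewrite /induced ab !inE av bv aA bA.
by rewrite /= uv; apply/allP=> y yp /=; apply: contraNneq vp => <-.
Qed.

Lemma connected_inner : connected_in inner.
Proof.
move=> u w uI wI; have [p [Hp Hu Hl]] := connect_uniq_path (econn u w).
apply/connectP; exists p => //; apply: (sub_in_path (P := mem inner) (e := e)) => //.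
  by move=> a b aI bI ab; rewrite /induced ab aI bI.
apply/andP; split=> //; apply/allP=> z zp.
have [->|zl] := eqVneq z (last u p); first by rewrite Hl.
have [a [b [ab az zb]]] := uniq_path_inner_nbrs Hp Hu zp zl.
by apply: nbrs2_inner ab _ zb; rewrite esym.
Qed.

Lemma connected_inner_ind (P : {set V} -> Prop) :
  (forall w, w \in inner -> P [set w]) ->
  (forall A v n3 n1 n2, connected_in A -> A \subset inner -> peripheral A v n3 ->
     other_nbrs v n3 n1 n2 -> P (A :\ v) -> P A) ->
  forall A, A != set0 -> connected_in A -> A \subset inner -> P A.
Proof.
move=> P1 PD A; have [k] := ubnP #|A|; elim: k A => // k IH A Ak A0 Aconn Ain.
have [/cards1P[w Aw]|A1] := boolP (#|A| == 1).
  by rewrite Aw; apply: P1; rewrite -sub1set -Aw.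
have [v [n3 vP]] : exists v n, peripheral A v n.
  by apply: connected_in_peripheral => //; rewrite ltn_neqAle eq_sym A1 card_gt0.
case: (vP) => vA n3A vn3 _.
have [n1 [n2 vN]] := inner_nbrs (subsetP Ain v vA) vn3.
apply: (PD A v n3 n1 n2 Aconn Ain vP vN); apply: IH.
- by move: Ak; rewrite (cardsD1 v A) vA.
- apply/set0Pn; exists n3; rewrite !inE n3A andbT.
  by apply: contraTneq vn3 => ->; rewrite eirr.
- exact: connected_inD1 Aconn vP.
- exact: subset_trans (subsetDl _ _) Ain.
Qed.

Lemma peripheral_side_free (A : {set V}) v n3 n : connected_in A -> peripheral A v n3 ->
  e v n -> n != n3 -> {in A, forall u, u != v -> ~~ connect (rv v) n u}.
Proof.
move=> Aconn [vA n3A vn3 vP] vn nn3 u uA uv; apply/negP=> nu.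
have [p [Hp Hu Hl]] := connect_uniq_path (Aconn u v uA vA).
case/lastP: p Hp Hu Hl => [|p y] Hp Hu Hl; first by move: uv; rewrite -Hl eqxx.
rewrite last_rcons in Hl; subst y.
have [up /and3P[pv pA _]] := uniq_path_last_edge (@induced_sub A) Hp Hu.
rewrite esym in pv; rewrite (vP _ pA pv) in up.
by have := rv_nbrs_disconnected vn vn3 nn3; rewrite (connect_trans nu up).
Qed.

Lemma rv_side_avoid (A : {set V}) v n z : v \in A -> e v n ->
  {in A, forall u, u != v -> ~~ connect (rv v) n u} ->
  connect (rv v) n z -> connect (avoid A) n z.
Proof.
move=> vA vn free /connectP[p Hp ->]; apply/connectP; exists p => //.
have nv : n != v by apply: contraTneq vn => ->; rewrite eirr.
have vN := rv_path_notin nv Hp.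
apply: (sub_in_path (P := [pred y | y \notin A]) (e := rv v)) => //.
  by move=> a b; rewrite !inE => aA bA /and3P[ab _ _]; rewrite /avoid ab aA bA.
apply/allP=> y yp /=; apply/negP=> yA.
have yv : y != v by apply: contraNneq vN => <-.
by have := free y yA yv; rewrite (path_connect Hp yp).
Qed.

Lemma side1_avoid w n z : e w n -> connect (rv w) n z -> connect (avoid [set w]) n z.
Proof.
by move=> wn; apply: rv_side_avoid (set11 w) wn _ => u; rewrite inE => /eqP->; rewrite eqxx.
Qed.

Lemma leaves_nonadjacent x y : ~~ e (l x) (l y).
Proof.
apply/negP=> xy; pose S := [set l x; l y].
have S_closed a b : a \in S -> e a b -> b \in S.
  rewrite !inE => /orP[]/eqP-> ab.
    by rewrite (leaf_nbr_uniq (leaf_notin_inner x) ab xy) eqxx orbT.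
  by rewrite (leaf_nbr_uniq (leaf_notin_inner y) ab (_ : e (l y) (l x))) ?eqxx // esym.
have : [set l z | z : X] \subset S.
  by apply/subsetP=> z _; apply: connect_closed_pred S_closed (set21 _ _) (econn (l x) z).
move/subset_leq_card; rewrite card_imset // cards2 => /(leq_trans X_ge3).
by case: (_ != _).
Qed.

Lemma inner_nonempty : inner != set0.
Proof.
have /card_gt0P[x _] : 0 < #|X| := leq_trans (isT : 0 < 3) X_ge3.
have : 0 < degree e (l x) by rewrite (proj2 (leaf_deg _)) //; exists x.
case/card_gt0P=> w; rewrite inE => xw; apply/set0Pn; exists w.
rewrite inE; apply/forallP=> y; apply: contraTneq xw => <-.
exact: leaves_nonadjacent.
Qed.

Definition side (A : {set V}) n := [set y | connect (avoid A) n (l y)].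
Definition block (A : {set V}) x := side A (l x).
Definition blocks (A : {set V}) := [set block A x | x : X].

Lemma block_side (A : {set V}) n x : connect (avoid A) n (l x) -> block A x = side A n.
Proof.
by move=> nx; apply/setP=> y; rewrite !inE (same_connect (@avoid_sym A) nx).
Qed.

Lemma block_sideE (A : {set V}) n x : (block A x == side A n) = connect (avoid A) n (l x).
Proof.
apply/eqP/idP=> [E|]; last exact: block_side.
have : x \in block A x by rewrite inE connect0.
by rewrite E inE.
Qed.

Lemma side_neq (A : {set V}) v n n' x : v \in A -> e v n -> e v n' -> n != n' ->
  x \in side A n -> side A n != side A n'.
Proof.
move=> vA vn vn' nn' xn; apply: contraTneq (connect0 (rv v) (l x)) => E.
have := xn; rewrite E inE => /(connect_avoid_rv vA) n'x; rewrite inE in xn.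
exact: rv_sides_apart vn vn' nn' (connect_avoid_rv vA xn) n'x.
Qed.

Lemma block_neq (A : {set V}) v a b : v \in A -> ~~ connect (rv v) (l a) (l b) ->
  block A a != block A b.
Proof.
move=> vA; apply: contraNneq => E; apply: (connect_avoid_rv vA).
by rewrite -block_sideE; apply/eqP; rewrite -E.
Qed.

Lemma block_inner x : block inner x = [set x].
Proof.
apply/setP=> y; rewrite !inE; apply/idP/eqP=> [xy|->]; last exact: connect0.
apply: l_inj; apply/eqP.
apply: (connect_closed_pred (S := pred1 (l x)) _ _ xy) => //= a b /eqP-> /and3P[xb _].
rewrite inE negb_forall => /existsP[z /negPn/eqP zb].
by move: (leaves_nonadjacent x z); rewrite zb xb.
Qed.

Section RemovePeripheral.
Variables (A : {set V}) (v n1 n2 n3 : V).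
Hypotheses (A_conn : connected_in A) (vP : peripheral A v n3) (vN : other_nbrs v n3 n1 n2).

Let vA : v \in A. Proof. by case: vP. Qed.
Let vn3 : e v n3. Proof. by case: vP. Qed.
Let n12 : n1 != n2. Proof. by case: vN => -[]. Qed.
Let n13 : n1 != n3. Proof. by case: vN => -[]. Qed.
Let n23 : n2 != n3. Proof. by case: vN => -[]. Qed.
Let vn1 : e v n1. Proof. by case: vN. Qed.
Let vn2 : e v n2. Proof. by case: vN. Qed.
Let v_nbrs : forall w, e v w -> [\/ w = n3, w = n1 | w = n2]. Proof. by case: vN. Qed.
Let vI : v \in inner. Proof. exact: nbrs2_inner n12 vn1 vn2. Qed.

Lemma outer_notin n : e v n -> n != n3 -> n \notin A.
Proof. by case: vP => _ _ _ vU vn; apply: contra => nA; rewrite (vU n). Qed.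

Lemma outer_side_avoid n z : e v n -> n != n3 -> connect (rv v) n z -> connect (avoid A) n z.
Proof.
move=> vn nn3; exact: rv_side_avoid vA vn (peripheral_side_free A_conn vP vn nn3).
Qed.

Lemma outer_side_block n : e v n -> n != n3 -> side A n \in blocks A.
Proof.
move=> vn nn3; have [x /(outer_side_avoid vn nn3) nx] := rv_side_leaf vn.
by apply/imsetP; exists x; rewrite // (block_side nx).
Qed.

Lemma outer_sides_neq : side A n1 != side A n2.
Proof.
have [x /(outer_side_avoid vn1 n13) n1x] := rv_side_leaf vn1.
by apply: (side_neq (x := x)) vA vn1 vn2 n12 _; rewrite inE.
Qed.

Definition merged z := [|| z == v, connect (avoid A) n1 z | connect (avoid A) n2 z].

Lemma merged_closed x y : merged x -> connect (avoid A) x y -> merged y.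
Proof.
case/or3P=> [/eqP->|xn|xn] xy; rewrite /merged.
- by rewrite avoid_sym in xy; rewrite (avoid_isolated vA xy) eqxx.
- by rewrite (connect_trans xn xy) orbT.
- by rewrite (connect_trans xn xy) !orbT.
Qed.

Lemma merged_nbr w : e v w -> w \notin A :\ v -> merged w.
Proof.
move=> vw; case: (v_nbrs vw) => ->; rewrite /merged ?connect0 ?orbT //.
by case: vP => _ n3A _ _; rewrite !inE n3A andbT negbK => /eqP n3v; move: vn3; rewrite n3v eirr.
Qed.

Lemma merged_connect w : merged w -> connect (avoid (A :\ v)) v w.
Proof.
have vn n : e v n -> n != n3 -> avoid (A :\ v) v n.
  by move=> vn nn3; rewrite /avoid vn !inE eqxx (negbTE (outer_notin vn nn3)) andbF.
case/or3P=> [/eqP->|nw|nw]; first exact: connect0.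
  exact: (connect_trans (connect1 (vn _ vn1 n13)) (connect_avoidS (subsetDl A [set v]) nw)).
exact: (connect_trans (connect1 (vn _ vn2 n23)) (connect_avoidS (subsetDl A [set v]) nw)).
Qed.

Lemma connect_avoidD1 z z' :
  connect (avoid (A :\ v)) z z' = connect (avoid A) z z' || merged z && merged z'.
Proof.
apply/idP/idP.
  pose R x y := connect (avoid A) x y || merged x && merged y.
  apply: (@connect_sub_preorder _ _ R) => [x|x y w|x y]; rewrite /R.
  - by rewrite connect0.
  - case/orP=> [yx|/andP[My Mx]] /orP[xw|/andP[Mx' Mw]].
    + by rewrite (connect_trans yx xw).
    + by rewrite Mw (merged_closed Mx' _) ?orbT // avoid_sym.
    + by rewrite My (merged_closed Mx xw) orbT.
    + by rewrite My Mw orbT.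
  case/and3P=> xy xN yN.
  have [Ex|xv] := eqVneq x v.
    by rewrite Ex in xy; rewrite (merged_nbr xy yN) Ex /merged eqxx !orbT.
  have [Ey|yv] := eqVneq y v.
    have vx : e v x by rewrite esym -Ey.
    by rewrite (merged_nbr vx xN) Ey /merged eqxx !orbT.
  by move: xN yN; rewrite !inE xv yv /= => xA yA; rewrite connect1 // /avoid xy xA yA.
case/orP=> [zz'|/andP[Mz Mz']]; first exact: (connect_avoidS (subsetDl A [set v]) zz').
by apply: connect_trans (merged_connect Mz'); rewrite avoid_sym; apply: merged_connect.
Qed.

Definition merge_sides (B : {set X}) :=
  if (B == side A n1) || (B == side A n2) then side A n1 :|: side A n2 else B.

Lemma merged_leaf x : merged (l x) = (block A x == side A n1) || (block A x == side A n2).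
Proof. by rewrite /merged !block_sideE (negbTE (inner_neq x vI)). Qed.

Lemma merged_side z : (z \in side A n1 :|: side A n2) = merged (l z).
Proof. by rewrite !inE /merged (negbTE (inner_neq z vI)). Qed.

Lemma blockD1 x : block (A :\ v) x = merge_sides (block A x).
Proof.
apply/setP=> y; rewrite /merge_sides -merged_leaf inE connect_avoidD1.
case: (boolP (merged (l x))) => Mx /=; last by rewrite orbF inE.
rewrite merged_side; case: (boolP (merged (l y))) => My; first by rewrite orbT.
by rewrite orbF; apply: contraNF My => /(merged_closed Mx).
Qed.

Lemma merge_sides_inj : {in blocks A :\ side A n2 &, injective merge_sides}.
Proof.
have not_union B : B \in blocks A -> B != side A n1 -> B != side A n2 ->
    B != side A n1 :|: side A n2.
  case/imsetP=> x _ -> B1 B2; apply/eqP=> E.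
  have : x \in side A n1 :|: side A n2 by rewrite -E inE connect0.
  by rewrite merged_side merged_leaf (negbTE B1) (negbTE B2).
move=> B B'; rewrite !inE => /andP[B2 BP] /andP[B'2 B'P].
rewrite /merge_sides (negbTE B2) (negbTE B'2) !orbF.
have [->|B1] := eqVneq B (side A n1); have [->|B'1] := eqVneq B' (side A n1) => //.
- by move=> E; move: (not_union _ B'P B'1 B'2); rewrite -E eqxx.
- by move=> E; move: (not_union _ BP B1 B2); rewrite E eqxx.
Qed.

Lemma card_blocksD1 : #|blocks A| = #|blocks (A :\ v)| + 1.
Proof.
have -> : blocks (A :\ v) = [set merge_sides (block A x) | x : X].
  by apply: eq_imset => x; apply: blockD1.
apply: card_imset_merge (outer_side_block vn1 n13) (outer_side_block vn2 n23)
  outer_sides_neq _ merge_sides_inj.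
by rewrite /merge_sides !eqxx orbT.
Qed.

Lemma supports_outer_sides TT a b c : supports e l TT a b c v -> exists p q s,
  [/\ connect (rv v) n1 (l p), connect (rv v) n2 (l q), connect (rv v) n3 (l s) &
      [/\ [set p; q] \in TT, [set p; s] \in TT & [set q; s] \in TT]].
Proof.
(* a, b and c lie in pairwise different sides of v, hence one in each. *)
case=> [[av bv cv] [ab ac bc] [abT acT bcT]].
have side_of y : l y != v -> [\/ connect (rv v) n1 (l y), connect (rv v) n2 (l y)
    | connect (rv v) n3 (l y)].
  by case/rv_nbr_side=> n /v_nbrs[]->; [constructor 3|constructor 1|constructor 2].
have same n y z : connect (rv v) n (l y) -> connect (rv v) n (l z) -> connect (rv v) (l y) (l z).
  by rewrite rv_sym; apply: connect_trans.
have baT : [set b; a] \in TT by rewrite setUC.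
have caT : [set c; a] \in TT by rewrite setUC.
have cbT : [set c; b] \in TT by rewrite setUC.
case: (side_of a av) => Ha; case: (side_of b bv) => Hb; case: (side_of c cv) => Hc;
  first [ by move: ab; rewrite (same _ _ _ Ha Hb)
        | by move: ac; rewrite (same _ _ _ Ha Hc)
        | by move: bc; rewrite (same _ _ _ Hb Hc)
        | by exists a, b, c | by exists a, c, b | by exists b, a, c
        | by exists b, c, a | by exists c, a, b | by exists c, b, a ].
Qed.

Lemma card_crossD1 TT : pair_set TT -> (exists a b c, supports e l TT a b c v) ->
  #|cross (block (A :\ v)) TT| + 2 <= #|cross (block A) TT|.
Proof.
move=> pairT [a [b [c /supports_outer_sides[p [q [s [pn1 qn2 sn3 [pqT psT qsT]]]]]]]].
have Bp : block A p = side A n1 by apply/block_side/(outer_side_avoid vn1 n13).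
have Bq : block A q = side A n2 by apply/block_side/(outer_side_avoid vn2 n23).
have Bs n : e v n -> n != n3 -> block A s != side A n.
  move=> vn nn3; rewrite block_sideE.
  by apply: contraNN (rv_sides_apart vn vn3 nn3 (connect0 _ n) sn3) => /(connect_avoid_rv vA).
have Bs1 := Bs _ vn1 n13; have Bs2 := Bs _ vn2 n23.
rewrite (eq_cross _ blockD1).
apply: (card_cross_merge (k1 := side A n1) (k2 := side A n2) (c := block A s)) => //.
- by rewrite /merge_sides !eqxx orbT.
- exact: outer_sides_neq.
- by rewrite -Bp -Bq cross_pair // Bp Bq outer_sides_neq.
- by rewrite -Bp cross_pair // Bp eq_sym.
- by rewrite -Bq cross_pair // Bq eq_sym.
Qed.

End RemovePeripheral.

Lemma card_blocks1 w : w \in inner -> #|blocks [set w]| = 3.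
Proof.
move=> wI; have /card_gt0P[n] : 0 < degree e w by rewrite (inner_deg (innerP _ wI)).
rewrite inE => wn; have [n1 [n2 [[n12 n1n n2n] wn1 wn2 w_nbrs]]] := inner_nbrs wI wn.
have sideP m : e w m -> side [set w] m \in blocks [set w].
  move=> wm; have [x /(side1_avoid wm) mx] := rv_side_leaf wm.
  by apply/imsetP; exists x; rewrite // (block_side mx).
have -> : blocks [set w] = [set side [set w] n; side [set w] n1; side [set w] n2].
  apply/eqP; rewrite eqEsubset; apply/andP; split; apply/subsetP; last first.
    by move=> B; rewrite !in_setU !in_set1 => /orP[/orP[]|]/eqP->; apply: sideP.
  move=> _ /imsetP[y _ ->]; have [m wm /(side1_avoid wm) my] := rv_nbr_side (inner_neq y wI).
  by rewrite (block_side my); case: (w_nbrs _ wm) => ->; rewrite !inE eqxx ?orbT.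
have [x /(side1_avoid wn) nx] := rv_side_leaf wn.
have [x1 /(side1_avoid wn1) n1x] := rv_side_leaf wn1.
rewrite cards3 //.
- by apply: (side_neq (x := x)) (set11 w) wn wn1 _ _; rewrite ?inE // eq_sym.
- by apply: (side_neq (x := x)) (set11 w) wn wn2 _ _; rewrite ?inE // eq_sym.
- by apply: (side_neq (x := x1)) (set11 w) wn1 wn2 n12 _; rewrite inE.
Qed.

Lemma card_blocks A : A != set0 -> connected_in A -> A \subset inner ->
  #|blocks A| = #|A| + 2.
Proof.
move: A; apply: (@connected_inner_ind (fun A => #|blocks A| = #|A| + 2)).
  by move=> w wI; rewrite card_blocks1 // cards1.
move=> A v n3 n1 n2 Aconn _ vP vN IH.
rewrite (card_blocksD1 Aconn vP vN) IH.
by case: vP => vA _ _ _; rewrite [#|A|](cardsD1 v) vA; lia.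
Qed.

Lemma card_cross TT : pair_set TT ->
  {in inner, forall v, exists a b c, supports e l TT a b c v} ->
  forall A, A != set0 -> connected_in A -> A \subset inner ->
  2 * #|A| + 1 <= #|cross (block A) TT|.
Proof.
move=> pairT cover.
apply: (@connected_inner_ind (fun A => 2 * #|A| + 1 <= #|cross (block A) TT|)).
  move=> w wI; have [a [b [c [[av bv cv] [ab ac bc] [abT acT bcT]]]]] := cover w wI.
  by rewrite cards1; apply: cross_triangle abT acT bcT _ _ _; apply: block_neq (set11 w) _.
move=> A v n3 n1 n2 Aconn Ain vP vN IH.
have vA : v \in A by case: vP.
have := card_crossD1 Aconn vP vN pairT (cover v (subsetP Ain v vA)).
by move: IH; rewrite [#|A|](cardsD1 v) vA; lia.
Qed.

Lemma card_leaves : #|X| = #|inner| + 2.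
Proof.
rewrite -(card_blocks inner_nonempty connected_inner (subxx _)).
have -> : blocks inner = [set [set x] | x : X] by apply: eq_imset => x; apply: block_inner.
by rewrite card_imset //; apply: set1_inj.
Qed.

Lemma triplet_cover_card TT : triplet_cover e l TT -> 2 * #|X| - 3 <= #|TT|.
Proof.
case=> pairT cover.
have cover' : {in inner, forall v, exists a b c, supports e l TT a b c v}.
  by move=> v /innerP; apply: cover.
have := card_cross pairT cover' inner_nonempty connected_inner (subxx _).
rewrite (eq_cross _ block_inner) card_cross_inj //; last exact: set1_inj.
by rewrite card_leaves; lia.
Qed.

Lemma triplet_cover_tight : exists TT, triplet_cover e l TT /\ #|TT| <= 2 * #|X| - 3.
Proof.
have /card_gt0P[r _] : 0 < #|X| := leq_trans (isT : 0 < 3) X_ge3.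
pose away v (ab : X * X) := [&& ~~ connect (rv v) (l ab.1) (l ab.2),
  ~~ connect (rv v) (l ab.1) (l r) & ~~ connect (rv v) (l ab.2) (l r)].
have /fin_all_exists[g gP] : forall v, exists ab, v \in inner -> away v ab.
  move=> v; have [vI|] := boolP (v \in inner); last by exists (r, r).
  by have [a [b ab]] := rv_leaves_apart vI (inner_neq r vI); exists (a, b).
pose TT := [set [set x; r] | x in [set~ r]] :|: [set [set (g v).1; (g v).2] | v in inner].
exists TT; split; last first.
  apply: leq_trans (leq_card_setU _ _).1 _.
  apply: leq_trans (leq_add (leq_imset_card _ _) (leq_imset_card _ _)) _.
  by rewrite cardsC1 card_leaves; move: #|inner| => k; lia.
split.
  move=> S; rewrite inE => /orP[/imsetP[x xr ->]|/imsetP[v vI ->]].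
    by rewrite cards2; move: xr; rewrite !inE => ->.
  have /and3P[ab _ _] := gP v vI; rewrite cards2.
  by have -> // : (g v).1 != (g v).2 by apply: contraNneq ab => ->; apply: connect0.
move=> v /innerP vI; have /and3P[ab ar br] := gP v vI.
have notr y : ~~ connect (rv v) (l y) (l r) -> y \in [set~ r].
  by rewrite !inE; apply: contraNneq => ->; apply: connect0.
exists (g v).1, (g v).2, r; split; split; rewrite ?inner_neq //.
- by rewrite inE; apply/orP; right; apply/imsetP; exists v.
- by rewrite inE; apply/orP; left; apply/imsetP; exists (g v).1; rewrite ?notr.
- by rewrite inE; apply/orP; left; apply/imsetP; exists (g v).2; rewrite ?notr.
Qed.

End PhyloTree.

Theorem proposition3 (X V : finType) (e : rel V) (l : X -> V) :
  3 <= #|X| -> binary_phylo e l ->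
  (forall TT : {set {set X}}, triplet_cover e l TT -> 2 * #|X| - 3 <= #|TT|) /\
  (exists TT : {set {set X}}, triplet_cover e l TT /\ #|TT| = 2 * #|X| - 3).
Proof.
move=> X_ge3 [[[esym eirr] [econn eacyc]] l_inj leaf_deg inner_deg].
have lower := triplet_cover_card esym eirr econn eacyc l_inj leaf_deg inner_deg X_ge3.
split=> //.
have [TT [TTcover TTcard]] :=
  triplet_cover_tight esym eirr econn eacyc l_inj leaf_deg inner_deg X_ge3.
by exists TT; split=> //; apply/eqP; rewrite eqn_leq TTcard lower.
Qed.
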